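(* Let $S\subseteq[d]$. Let $\phi_n$ be a decision rule (test) for the hypotheses $H^{\mathcal{I}}_{0,S'}$, and define the decision rule $\phi^{\mathcal{MI}}_n$ by $\phi^{\mathcal{MI}}_n(\emptyset,\alpha)=\phi_n(\emptyset,\alpha)$ and, for $S\neq\emptyset$, $$\phi^{\mathcal{MI}}_n(S,\alpha)=\begin{cases}1&\text{if }\phi_n(S,\alpha)=1\text{ or }\min_{j\in S}\phi_n(S\setminus\{j\},\alpha)=0,\\0&\text{otherwise.}\end{cases}$$ Assume that $\phi_n$ has pointwise asymptotic level and pointwise asymptotic power for $S$ and for all $S\setminus\{j\}$, $j\in S$. Then $\phi^{\mathcal{MI}}_n$ has pointwise asymptotic level for $H^{\mathcal{MI}}_{0,S}$ and pointwise asymptotic power of at least $1-\alpha$, i.e. for all $\alpha\in(0,1)$, $$\inf_{\mathbb{P}\in H^{\mathcal{MI}}_{A,S}}\lim_{n\to\infty}\mathbb{P}(\phi^{\mathcal{MI}}_n(S)=1)\ge1-\alpha.$$ If $\phi_n$ has uniform asymptotic level and power (for $S$ and all $S\setminus\{j\}$, $j\in S$), then $\phi^{\mathcal{MI}}_n$ has uniform asymptotic level and uniform asymptotic power of at least $1-\alpha$ (i.e. the limit and infimum above may be interchanged).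
   Context: Let $\mathcal{P}$ be the family of all distributions of $(E,X,Y)$, $X=(X_1,\dots,X_d)$, induced by structural causal models whose graph is a DAG, which are faithful to that DAG, and in which $E$ is exogenous. For $S\subseteq[d]$, $S$ is invariant if $Y\perp\!\!\!\perp E\mid X_S$; $\mathcal{I}$ is the collection of invariant sets; $S$ is minimally invariant if $S\in\mathcal{I}$ and no proper subset of $S$ is in $\mathcal{I}$; $\mathcal{MI}$ is the collection of minimally invariant sets. The hypotheses $H^{\mathcal{I}}_{0,S}$ and $H^{\mathcal{MI}}_{0,S}$ are the subsets of $\mathcal{P}$ on which $S\in\mathcal{I}$, resp. $S\in\mathcal{MI}$; the alternatives are $H^{\mathcal{I}}_{A,S}=\mathcal{P}\setminus H^{\mathcal{I}}_{0,S}$ and $H^{\mathcal{MI}}_{A,S}=\mathcal{P}\setminus H^{\mathcal{MI}}_{0,S}$. Given observations $\mathcal{D}_n$ (not necessarily independent) of $(X,E,Y)$, a decision rule $\phi_n(S,\mathcal{D}_n,\alpha)\in\{0,1\}$ rejects the hypothesis for $S$ when it equals $1$; dependence on $\mathcal{D}_n$ is suppressed. A test $\psi_n$ of $H_0$ against $H_A=\mathcal{P}\setminus H_0$ has pointwise asymptotic level if for all $\alpha\in(0,1)$, $\sup_{\mathbb{P}\in H_0}\lim_{n\to\infty}\mathbb{P}(\psi_n=1)\le\alpha$, and pointwise asymptotic power if for all $\alpha\in(0,1)$, $\inf_{\mathbb{P}\in H_A}\lim_{n\to\infty}\mathbb{P}(\psi_n=1)=1$; it has uniform asymptotic level (resp.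 power) if the same holds with limit and supremum (resp. infimum) interchanged. Saying $\phi_n$ has level/power ''for $S$'' refers to testing $H^{\mathcal{I}}_{0,S}$ against $H^{\mathcal{I}}_{A,S}$. *)

From HB Require Import structures.
From mathcomp Require Import all_boot all_order all_algebra.
From mathcomp Require Import all_classical all_reals all_analysis.
Set Implicit Arguments. Unset Strict Implicit. Unset Printing Implicit Defensive.
Import Order.TTheory GRing.Theory Num.Theory.

Local Open Scope classical_set_scope.
Local Open Scope ring_scope.

(* node d : inl i = X_(i+1), inr true = E, inr false = Y *)
Definition node (d : nat) : finType := ('I_d + bool)%type.
Definition nE {d : nat} : node d := inr true.
Definition nY {d : nat} : node d := inr false.
Definition nX {d : nat} (i : 'I_d) : node d := inl i.

Record dag (d : nat) := Dag {
  edge : rel (node d);                                  (* edge u v : u -> v *)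
  dag_acyclic : forall u v, edge u v -> ~~ connect edge v u;
  dag_E_exogenous : forall v, ~~ edge v nE
}.

Definition adj {d} (G : dag d) : rel (node d) :=
  fun u v => edge G u v || edge G v u.

Definition triple_open {d} (G : dag d) (Z : {set node d}) (u v w : node d) : bool :=
  if edge G u v && edge G w v then [exists z in Z, connect (edge G) v z]
  else v \notin Z.

Fixpoint inner_open {d} (G : dag d) (Z : {set node d}) (u v : node d)
  (s : seq (node d)) : bool :=
  match s with
  | [::] => true
  | w :: s' => triple_open G Z u v w && inner_open G Z v w s'
  end.

Definition active_path {d} (G : dag d) (Z : {set node d}) (a b : node d)
  (p : seq (node d)) : bool :=
  [&& path (adj G) a p, last a p == b, uniq (a :: p) &
      match p with [::] => true | v :: s => inner_open G Z a v s end].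

Definition dsep {d} (G : dag d) (a b : node d) (Z : {set node d}) : Prop :=
  ~ exists p : seq (node d), active_path G Z a b p.

Definition Xset {d} (S : {set 'I_d}) : {set node d} := [set nX i | i in S].

(* ci P S stands for "Y _||_ E | X_S" under the distribution P. *)
Section Hyps.
Variables (Dist : Type) (d : nat) (ci : Dist -> {set 'I_d} -> Prop).

Definition H0I (S : {set 'I_d}) : set Dist := [set P | ci P S].

Definition min_inv (P : Dist) (S : {set 'I_d}) : Prop :=
  ci P S /\ forall S' : {set 'I_d}, S' \proper S -> ~ ci P S'.

Definition H0MI (S : {set 'I_d}) : set Dist := [set P | min_inv P S].
End Hyps.

Section Tests.
Variables (R : realType) (dd : measure_display) (T : measurableType dd)
  (Dist : Type) (law : Dist -> nat -> probability T R).
(* law P n : the law of the data D_n under P (on a data space T). *)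

Local Open Scope ereal_scope.

Definition prob_rej (psi : nat -> T -> bool) (P : Dist) (n : nat) : \bar R :=
  law P n [set t | psi n t].

(* psi : alpha -> n -> data -> {0,1}; H0 a subset of the model class Dist,
   the alternative is its complement ~` H0. limits are limsup (level) and
   liminf (power). *)
Definition pw_level (H0 : set Dist) (psi : R -> nat -> T -> bool) : Prop :=
  forall alpha : R, (0 < alpha < 1)%R ->
    ereal_sup [set limn_esup (prob_rej (psi alpha) P) | P in H0] <= alpha%:E.

Definition pw_power_atleast (H0 : set Dist) (psi : R -> nat -> T -> bool)
   (b : R -> \bar R) : Prop :=
  forall alpha : R, (0 < alpha < 1)%R ->
    b alpha <= ereal_inf [set limn_einf (prob_rej (psi alpha) P) | P in ~` H0].

Definition pw_power (H0 : set Dist) (psi : R -> nat -> T -> bool) : Prop :=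
  forall alpha : R, (0 < alpha < 1)%R ->
    ereal_inf [set limn_einf (prob_rej (psi alpha) P) | P in ~` H0] = 1.

Definition unif_level (H0 : set Dist) (psi : R -> nat -> T -> bool) : Prop :=
  forall alpha : R, (0 < alpha < 1)%R ->
    limn_esup (fun n => ereal_sup [set prob_rej (psi alpha) P n | P in H0])
      <= alpha%:E.

Definition unif_power_atleast (H0 : set Dist) (psi : R -> nat -> T -> bool)
   (b : R -> \bar R) : Prop :=
  forall alpha : R, (0 < alpha < 1)%R ->
    b alpha <= limn_einf (fun n => ereal_inf [set prob_rej (psi alpha) P n | P in ~` H0]).

Definition unif_power (H0 : set Dist) (psi : R -> nat -> T -> bool) : Prop :=
  forall alpha : R, (0 < alpha < 1)%R ->
    limn_einf (fun n => ereal_inf [set prob_rej (psi alpha) P n | P in ~` H0]) = 1.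
End Tests.

Definition phiMI {d : nat} {R T : Type} (phi : R -> nat -> {set 'I_d} -> T -> bool)
  (alpha : R) (n : nat) (S : {set 'I_d}) (t : T) : bool :=
  if S == finset.set0 then phi alpha n S t
  else phi alpha n S t || [exists j in S, ~~ phi alpha n (S :\ j) t].

From HB Require Import structures.
From mathcomp Require Import all_boot all_order all_algebra.
From mathcomp Require Import all_classical all_reals all_analysis.
From mathcomp Require Import zify lra.
Import Order.TTheory GRing.Theory Num.Theory.
Local Open Scope ring_scope.

Set Implicit Arguments. Unset Strict Implicit. Unset Printing Implicit Defensive.

(* Under H^MI_{0,S}, S is invariant and no S \ {j} is, so a union bound over
   the events "phi rejects S" and "phi accepts S \ {j}" caps the rejection
   probability of phi^MI by alpha + |S| o(1).  Under the alternative, either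
   S is not invariant, and phi(S) alone rejects with probability tending to
   1, or S is invariant but not minimal; then some S \ {j} is invariant as
   well, and phi accepts it with probability at least 1 - alpha - o(1).
   The graphical step: let Z = X_S and Z' = X_S' (S' a proper subset of S)
   both d-separate E from Y.  If some w in Z \ Z' is an ancestor neither of
   Y nor of Z', take such a w with no other such vertex among its
   descendants: no vertex of Z \ {w}, nor E, nor Y descends from w, so an
   active path given Z \ {w} is active given Z.  Otherwise every vertex of
   Z is an ancestor of Y or of Z', and an active path given Z \ {w0}, cut
   at its first vertex that is an ancestor of Y but not of Z' and continued
   by a directed path to Y, is active given Z'. *)

Section d_separation.
Local Open Scope nat_scope.
Variables (d : nat) (G : dag d).
Local Notation e := (edge G).
Implicit Types (Z : {set node d}) (f g : nat -> node d).

Lemma connect_nE x : connect e x nE -> x = nE.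
Proof.
case/connectP => p; case/lastP: p => [_ ->//|p y].
rewrite rcons_path last_rcons => /andP[_ xE] yE.
by move: xE; rewrite -yE (negbTE (dag_E_exogenous G _)).
Qed.

Lemma connect_antisym u v : connect e u v -> connect e v u -> u = v.
Proof.
case/connectP => -[_ ->//|x p] /= /andP[ux px] -> vu.
have xu : connect e x u by apply: connect_trans vu; apply/connectP; exists p.
by move: (dag_acyclic ux); rewrite xu.
Qed.

Lemma edge_asym u v : e u v -> ~~ e v u.
Proof. by move=> uv; apply/negP => /connect1 vu; move: (dag_acyclic uv); rewrite vu. Qed.

Lemma connect_trail x y : connect e x y ->
  exists g m, [/\ g 0 = x, g m = y, forall i, i < m -> e (g i) (g i.+1) &
                  forall i j, i <= m -> j <= m -> g i = g j -> i = j].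
Proof.
case/connectP => p p_path; case: (shortenP p_path) => q q_path q_uniq _ q_last.
exists (nth x (x :: q)), (size q); split => //.
- by rewrite -[size q]/((size (x :: q)).-1) nth_last.
- by move=> i iq; move/(pathP x): q_path; apply.
- by move=> i j im jm; move/(uniqP x): q_uniq; apply; rewrite inE /= ltnS.
Qed.

Definition anc_set Z x := [exists z in Z, connect e x z].

Lemma anc_set_mem Z z : z \in Z -> anc_set Z z.
Proof. by move=> zZ; apply/existsP; exists z; rewrite zZ connect0. Qed.

Lemma anc_set_trans Z x y : connect e x y -> anc_set Z y -> anc_set Z x.
Proof.
move=> xy /existsP[z /andP[zZ yz]]; apply/existsP; exists z.
by rewrite zZ (connect_trans xy yz).
Qed.

Lemma anc_setS Z Z' x : Z \subset Z' -> anc_set Z x -> anc_set Z' x.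
Proof.
move=> sZZ' /existsP[z /andP[zZ xz]]; apply/existsP; exists z.
by rewrite xz (fintype.subsetP sZZ').
Qed.

Lemma triple_open_sub Z Z' u v w : Z' \subset Z ->
  (anc_set Z v -> anc_set Z' v) -> triple_open G Z u v w -> triple_open G Z' u v w.
Proof.
move=> sZ'Z anc_v; rewrite /triple_open; case: ifP => // _.
by apply: contra => /(fintype.subsetP sZ'Z).
Qed.

Lemma triple_open_out Z u v w : e v w -> v \notin Z -> triple_open G Z u v w.
Proof. by move=> vw; rewrite /triple_open (negbTE (edge_asym vw)) andbF. Qed.

Definition active_trail Z f n :=
  [/\ forall i, i < n -> adj G (f i) (f i.+1),
      forall i, i.+1 < n -> triple_open G Z (f i) (f i.+1) (f i.+2) &
      forall i j, i <= n -> j <= n -> f i = f j -> i = j].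

Lemma inner_openP Z x0 u v s :
  inner_open G Z u v s <->
  (forall i, i < size s -> triple_open G Z (nth x0 [:: u, v & s] i)
         (nth x0 [:: u, v & s] i.+1) (nth x0 [:: u, v & s] i.+2)).
Proof.
elim: s u v => [|w s IH] u v /=; first by split.
split; first by move=> /andP[uvw /IH open_s] [|i] //= lt_is; exact: open_s.
move=> open_s; apply/andP; split; first exact: (open_s 0).
by apply/IH => i lt_is; apply: (open_s i.+1).
Qed.

Lemma active_path_trail Z a b p : active_path G Z a b p ->
  active_trail Z (nth a (a :: p)) (size p) /\ nth a (a :: p) (size p) = b.
Proof.
case/and4P => p_path /eqP p_last p_uniq p_open; split; last first.
  by rewrite -p_last -[size p]/((size (a :: p)).-1) nth_last.
split.
- by move=> i ip; move/(pathP a): p_path; apply.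
- by case: p {p_path p_last p_uniq} p_open => // v s /(inner_openP _ a).
- by move=> i j ip jp; move/(uniqP a): p_uniq; apply; rewrite inE.
Qed.

Let nth_trail x0 f n i : i <= n -> nth x0 (f 0 :: mkseq (f \o succn) n) i = f i.
Proof. by case: i => //= i lt_in; rewrite nth_mkseq. Qed.

Lemma trail_active_path Z f n : active_trail Z f n ->
  active_path G Z (f 0) (f n) (mkseq (f \o succn) n).
Proof.
case=> f_adj f_open f_inj; apply/and4P; split.
- apply/(pathP (f 0)) => i; rewrite size_mkseq => lt_in.
  by rewrite nth_trail ?nth_mkseq ?(ltnW lt_in) //; exact: f_adj.
- by apply/eqP; rewrite (last_nth (f 0)) size_mkseq nth_trail.
- apply/(uniqP (f 0)) => i j; rewrite !inE /= size_mkseq !ltnS => i_n j_n.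
  by rewrite !nth_trail //; exact: f_inj.
- case def_p: (mkseq _ n) => [//|v s]; apply/(inner_openP _ (f 0)) => i lt_is.
  have size_s : (size s).+1 = n by rewrite -(size_mkseq (f \o succn) n) def_p.
  by rewrite -def_p !nth_trail; [apply: f_open|..]; lia.
Qed.

Lemma dsep_trailP a b Z : dsep G a b Z <->
  (forall f n, active_trail Z f n -> f 0 = a -> f n = b -> False).
Proof.
split=> [sep f n f_trail f0 fn|sep [p /active_path_trail[p_trail p_last]]].
  by apply: sep; exists (mkseq (f \o succn) n); rewrite -f0 -fn; exact: trail_active_path.
exact: sep p_trail _ p_last.
Qed.

Lemma active_trail_fwd Z f n i : active_trail Z f n -> i < n ->
  e (f i) (f i.+1) -> connect e (f i) (f n) || anc_set Z (f i).
Proof.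
case=> f_adj f_open _; move Dk: (n - i.+1) => k.
elim: k i Dk => [|k IH] i Dk lt_in fi.
  have -> : n = i.+1 by lia.
  by rewrite (connect1 fi).
have lt_i1n : i.+1 < n by lia.
have Dk1 : n - i.+2 = k by lia.
case/orP: (f_adj _ lt_i1n) => fi1.
  case/orP: (IH _ Dk1 lt_i1n fi1) => [fn|anc1].
    by rewrite (connect_trans (connect1 fi) fn).
  by rewrite (anc_set_trans (connect1 fi) anc1) orbT.
have := f_open _ lt_i1n; rewrite /triple_open fi fi1 /= => anc1.
by rewrite (anc_set_trans (connect1 fi) anc1) orbT.
Qed.

Lemma active_trail_bwd Z f n i : active_trail Z f n -> i < n ->
  e (f i.+1) (f i) -> connect e (f i.+1) (f 0) || anc_set Z (f i.+1).
Proof.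
case=> f_adj f_open _; elim: i => [|i IH] lt_in fi; first by rewrite (connect1 fi).
have lt_i_n : i < n by lia.
case/orP: (f_adj _ lt_i_n) => fi1.
  have := f_open _ lt_in; rewrite /triple_open fi1 fi /= => anc1.
  by rewrite (anc_set_trans (connect1 fi) anc1) orbT.
case/orP: (IH lt_i_n fi1) => [f0|anc1].
  by rewrite (connect_trans (connect1 fi) f0).
by rewrite (anc_set_trans (connect1 fi) anc1) orbT.
Qed.

Lemma active_trail_setD1 Z w f n : active_trail (Z :\ w) f n ->
  ~~ connect e w (f 0) -> ~~ connect e w (f n) -> ~~ anc_set (Z :\ w) w ->
  active_trail Z f n.
Proof.
move=> f_trail w0 wn w_anc; have [f_adj f_open f_inj] := f_trail.
split=> // i lt_i2n; have := f_open _ lt_i2n; rewrite /triple_open.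
case: ifP => collider; first exact/anc_setS/subD1set.
rewrite in_setD1 negb_and negbK => /orP[/eqP fw|//].
have [fwd|nfwd] := boolP (e (f i.+1) (f i.+2)).
  have := active_trail_fwd f_trail lt_i2n fwd.
  by rewrite fw (negbTE wn) (negbTE w_anc).
have f21 : e (f i.+2) (f i.+1) by move: (f_adj _ lt_i2n); rewrite /adj (negbTE nfwd).
have bwd : e (f i.+1) (f i).
  by move: (f_adj _ (ltnW lt_i2n)) collider; rewrite /adj f21 andbT => /orP[->|].
have := active_trail_bwd f_trail (ltnW lt_i2n) bwd.
by rewrite fw (negbTE w0) (negbTE w_anc).
Qed.

Lemma dsep_setD1 a b Z w :
  ~~ connect e w a -> ~~ connect e w b -> ~~ anc_set (Z :\ w) w ->
  dsep G a b Z -> dsep G a b (Z :\ w).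
Proof.
move=> wa wb w_anc /dsep_trailP sep; apply/dsep_trailP => f n f_trail f0 fn.
by apply: (sep f n) => //; apply: active_trail_setD1 f_trail _ _ w_anc; rewrite ?f0 ?fn.
Qed.

Definition splice f k g i := if i <= k then f i else g (i - k).

Lemma splice_addn f k g m : g 0 = f k -> splice f k g (k + m) = g m.
Proof.
rewrite /splice => g0; case: leqP => [km|_]; last by rewrite addKn.
have -> : m = 0 by lia.
by rewrite addn0.
Qed.

Section splice.
Variables (Z Z' : {set node d}) (b : node d) (f g : nat -> node d) (n k m : nat).
Hypotheses (f_trail : active_trail Z f n) (sub_Z'Z : Z' \subset Z)
  (Z_anc : forall z, z \in Z -> connect e z b || anc_set Z' z)
  (le_kn : k <= n)
  (f_pre : forall i, i < k -> connect e (f i) b -> anc_set Z' (f i))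
  (g0 : g 0 = f k) (g_edge : forall i, i < m -> e (g i) (g i.+1))
  (g_inj : forall i j, i <= m -> j <= m -> g i = g j -> i = j)
  (fk_anc : 0 < m -> ~~ anc_set Z' (f k)) (gm : g m = b).

Local Notation h := (splice f k g).

Let h_lo i : i <= k -> h i = f i.
Proof. by rewrite /splice => ->. Qed.

Let h_hi i : k <= i -> h i = g (i - k).
Proof.
rewrite /splice => ki; case: leqP => // ik.
have -> : i = k by lia.
by rewrite subnn g0.
Qed.

Let g_connect i j : i <= j -> j <= m -> connect e (g i) (g j).
Proof.
elim: j => [|j IH] ij jm; first by move: ij; rewrite leqn0 => /eqP->.
rewrite leq_eqVlt ltnS in ij; case/orP: ij => [/eqP->//|ij].
exact: connect_trans (IH ij (ltnW jm)) (connect1 (g_edge jm)).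
Qed.

Let g_not_anc j : 0 < j -> j <= m -> ~~ anc_set Z' (g j).
Proof.
move=> j0 jm; apply: contraNN (fk_anc (leq_trans j0 jm)).
by rewrite -g0; apply: anc_set_trans; exact: g_connect.
Qed.

Let splice_adj i : i < k + m -> adj G (h i) (h i.+1).
Proof.
have [f_adj _ _] := f_trail; move=> lt_ikm; case: (ltnP i k) => ik.
  by rewrite !h_lo ?(ltnW ik) //; apply: f_adj; exact: leq_trans ik le_kn.
by rewrite !h_hi ?(leqW ik) // subSn // /adj g_edge //; lia.
Qed.

Let splice_open i : i.+1 < k + m -> triple_open G Z' (h i) (h i.+1) (h i.+2).
Proof.
have [_ f_open _] := f_trail; move=> lt_ikm; case: (ltnP i.+1 k) => ik.
  rewrite !h_lo ?(ltnW ik) ?(ltnW (ltnW ik)) //.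
  apply: triple_open_sub sub_Z'Z _ (f_open _ (leq_trans ik le_kn)).
  case/existsP => z /andP[zZ fz].
  case/orP: (Z_anc zZ) => [zb|]; last exact: anc_set_trans.
  exact: f_pre ik (connect_trans fz zb).
rewrite [h i.+2]h_hi ?[h i.+1]h_hi //; last by lia.
apply: triple_open_out; first by rewrite (subSn ik); apply: g_edge; lia.
have [j0|j_gt0] := posnP (i.+1 - k).
  by rewrite j0 g0; apply: contraNN (fk_anc _); [exact: anc_set_mem|lia].
by apply: contraNN (g_not_anc j_gt0 _); [exact: anc_set_mem|lia].
Qed.

Let splice_inj i j : i <= k + m -> j <= k + m -> h i = h j -> i = j.
Proof.
have [_ _ f_inj] := f_trail.
wlog ij : i j / i <= j.
  by move=> H im jm hij; case: (leqP i j) => [|/ltnW] ji; [|symmetry]; apply: H.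
move=> im jm; case: (leqP j k) => jk.
  by rewrite !h_lo ?(leq_trans ij jk) //; apply: f_inj; lia.
case: (leqP k i) => ki.
  by rewrite !h_hi ?(ltnW jk) // => /g_inj; lia.
rewrite h_lo ?(ltnW ki) // h_hi ?(ltnW jk) // => fg.
have fb : connect e (f i) b by rewrite fg -gm; apply: g_connect; lia.
have g_na : ~~ anc_set Z' (g (j - k)) by apply: g_not_anc; lia.
by rewrite -fg (f_pre ki fb) in g_na.
Qed.

Lemma active_trail_splice : active_trail Z' h (k + m).
Proof. by split; [exact: splice_adj|exact: splice_open|exact: splice_inj]. Qed.

End splice.

Lemma dsep_superset a b Z Z' : Z' \subset Z ->
  (forall z, z \in Z -> connect e z b || anc_set Z' z) ->
  dsep G a b Z' -> dsep G a b Z.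
Proof.
move=> sZ'Z Z_anc /dsep_trailP sep'; apply/dsep_trailP => f n f_trail f0 fn.
pose bad i := [&& i <= n, connect e (f i) b & ~~ anc_set Z' (f i)].
have [ex_bad|no_bad] := pselect (exists i, bad i).
  case: (ex_minnP ex_bad) => k /and3P[kn fkb fk] k_min.
  have f_pre i : i < k -> connect e (f i) b -> anc_set Z' (f i).
    move=> ik fib; have i_n : i <= n by lia.
    apply: contraTT ik => nfi; rewrite -leqNgt; apply: k_min.
    by rewrite /bad fib nfi i_n.
  have [g [m [g0 gm g_edge g_inj]]] := connect_trail fkb.
  apply: (sep' (splice f k g) (k + m)) => //; last by rewrite splice_addn.
  exact: active_trail_splice f_trail sZ'Z Z_anc kn f_pre g0 g_edge g_inj (fun=> fk) gm.
apply: (sep' (splice f n (fun=> f n)) (n + 0)) => //; last by rewrite splice_addn.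
apply: active_trail_splice f_trail sZ'Z Z_anc (leqnn n) _ erefl _ _ _ fn => //.
- move=> i lt_in fib; have [//|nfi] := boolP (anc_set Z' (f i)).
  case: no_bad; exists i.
  by rewrite /bad fib nfi (ltnW lt_in).
- by move=> i j; rewrite !leqn0 => /eqP-> /eqP->.
Qed.

Lemma exists_minimal_desc (A : {set node d}) w0 : w0 \in A ->
  exists2 w, w \in A & forall z, z \in A -> connect e w z -> z = w.
Proof.
move=> w0A; case: (@arg_minnP _ w0 (mem A) (fun w => #|[set x | connect e w x]|) w0A).
move=> w wA w_min; exists w => // z zA wz; apply/eqP/negPn/negP => zw.
have : [set x | connect e z x] \proper [set x | connect e w x].
  apply/properP; split.
    by apply/fintype.subsetP => x; rewrite !inE; exact: connect_trans wz.
  exists w; first by rewrite inE connect0.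
  rewrite inE; apply/negP => zw'.
  by move/eqP: zw; apply; exact: connect_antisym zw' wz.
by move/proper_card; rewrite ltnNge w_min.
Qed.

Lemma dsep_exists_setD1 Z Z' : nE \notin Z -> Z' \proper Z ->
  dsep G nE nY Z -> dsep G nE nY Z' -> exists2 w, w \in Z & dsep G nE nY (Z :\ w).
Proof.
move=> EZ /properP[sZ'Z [w0 w0Z w0Z']] sepZ sepZ'.
pose W := [set w in Z :\: Z' | ~~ connect e w nY && ~~ anc_set Z' w].
have [W0|[w1 w1W]] := set_0Vmem W.
  exists w0 => //; apply: dsep_superset sepZ'.
    apply/fintype.subsetP => z zZ'.
    rewrite in_setD1 (fintype.subsetP sZ'Z) // andbT.
    by apply: contraNneq w0Z' => <-.
  move=> z /setD1P[_ zZ]; have [zZ'|zZ'] := boolP (z \in Z').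
    by rewrite anc_set_mem ?orbT.
  apply/negPn/negP; rewrite negb_or => zW.
  have : z \in W by rewrite !inE zZ zZ' zW.
  by rewrite W0 inE.
have [w /setIdP[/setDP[wZ _] /andP[wY wZ'_anc]] w_min] := exists_minimal_desc w1W.
exists w => //; apply: dsep_setD1 sepZ => //.
  by apply/negP => /connect_nE wE; rewrite -wE wZ in EZ.
apply/existsP => -[z /andP[/setD1P[zw zZ] wz]].
suff zW : z \in W by move/eqP: zw; apply; exact: w_min zW wz.
rewrite !inE zZ /=.
have [zZ'|_] := boolP (z \in Z').
  by rewrite (anc_set_trans wz (anc_set_mem zZ')) in wZ'_anc.
by rewrite (contraNN (connect_trans wz) wY) (contraNN (anc_set_trans wz) wZ'_anc).
Qed.

Let nX_inj : injective (@nX d).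
Proof. by move=> i j []. Qed.

Lemma inr_notin_Xset (A : {set 'I_d}) b : inr b \notin Xset A.
Proof. by apply/imsetP => -[]. Qed.

Lemma Xset_setD1 (A : {set 'I_d}) j : Xset (A :\ j) = Xset A :\ nX j.
Proof.
apply/setP => -[i|b]; rewrite in_setD1.
  by rewrite -[inl i]/(nX i) !mem_imset // in_setD1 (inj_eq nX_inj).
by rewrite !(negbTE (inr_notin_Xset _ _)) andbF.
Qed.

Lemma dsep_Xset_exists_setD1 (S S' : {set 'I_d}) : S' \proper S ->
  dsep G nE nY (Xset S) -> dsep G nE nY (Xset S') ->
  exists2 j, j \in S & dsep G nE nY (Xset (S :\ j)).
Proof.
move=> ltS'S sepS sepS'.
have [_ /imsetP[j jS ->]] := dsep_exists_setD1 (inr_notin_Xset S true)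
  (imset_proper (in2W nX_inj) ltS'S) sepS sepS'.
by exists j; rewrite ?Xset_setD1.
Qed.

End d_separation.

Local Open Scope classical_set_scope.

Lemma exists_invariant_setD1 (Dist : Type) d (G : Dist -> dag d)
    (ci : Dist -> {set 'I_d} -> Prop) P S :
  (forall S', ci P S' <-> dsep (G P) nE nY (Xset S')) ->
  ci P S -> ~ min_inv ci P S -> exists2 j, j \in S & ci P (S :\ j).
Proof.
move=> hci ciS notmin.
have [S' [ltS'S ciS']] : exists S' : {set 'I_d}, S' \proper S /\ ci P S'.
  apply: contrapT => noS'; apply: notmin; split => // S' ltS'S ciS'.
  by apply: noS'; exists S'.
have [j jS sepSj] :=
  dsep_Xset_exists_setD1 ltS'S (proj1 (hci S) ciS) (proj1 (hci S') ciS').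
by exists j => //; apply/hci.
Qed.

Section limn_esup_einf_near.
Context {R : realType}.
Local Open Scope ereal_scope.
Implicit Types (u : (\bar R)^nat).

Lemma limn_esup_le_nearP u (a : R) :
  limn_esup u <= a%:E <->
  (forall e : R, (0 < e)%R -> \forall n \near \oo, u n <= (a + e)%:E).
Proof.
split => [supu e e0|ev].
- have : limn_esup u < (a + e)%:E.
    by apply: le_lt_trans supu _; rewrite lte_fin ltrDl.
  rewrite /limn_esup limf_esupE => /ereal_inf_lt[_ [V V_oo <-] supV].
  apply: filterS V_oo => n Vn; apply: le_trans (ltW supV).
  by apply: ereal_sup_ubound; exists n.
- apply/lee_addgt0Pr => e e0; rewrite -EFinD /limn_esup limf_esupE.
  apply: le_trans (ereal_inf_lbound _) _.
    by exists [set n | u n <= (a + e)%:E]; [exact: ev|].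
  by apply: ge_ereal_sup => _ [n un <-].
Qed.

Lemma limn_einf_ge_nearP u (b : R) :
  b%:E <= limn_einf u <->
  (forall e : R, (0 < e)%R -> \forall n \near \oo, (b - e)%:E <= u n).
Proof.
rewrite /limn_einf leeNr -EFinN limn_esup_le_nearP.
split=> ev e /ev; apply: filterS => n;
  by rewrite leeNl -EFinN opprD opprK.
Qed.

End limn_esup_einf_near.

Lemma filter_forall_in T (F : set_system T) {FF : Filter F} (I : finType)
    (A : {set I}) (P : I -> T -> Prop) :
  (forall j, j \in A -> \forall x \near F, P j x) ->
  \forall x \near F, forall j, j \in A -> P j x.
Proof.
move=> FP; apply: filter_forall => j.
have [/FP|jA] := boolP (j \in A); first by apply: filterS => x Pjx _.
exact: nearW.
Qed.

Section limn_esup_split.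
Context {R : realType} (I : finType) (A : {set I}).
Local Open Scope ereal_scope.

Lemma limn_esup_le_split (u v : (\bar R)^nat) (w : I -> (\bar R)^nat) (a : R) :
  limn_esup v <= a%:E -> (forall j, j \in A -> 1 <= limn_einf (w j)) ->
  (forall n (e : R), v n <= (a + e)%:E ->
     (forall j, j \in A -> (1 - e)%:E <= w j n) -> u n <= (a + e *+ #|A|.+1)%:E) ->
  limn_esup u <= a%:E.
Proof.
move=> /limn_esup_le_nearP lim_v lim_w uvw; apply/limn_esup_le_nearP => e e0.
have e'0 : (0 < e / #|A|.+1%:R)%R by rewrite divr_gt0.
have near_w := filter_forall_in
  (fun j jA => (limn_einf_ge_nearP _ _).1 (lim_w j jA) _ e'0).
near=> n; rewrite -[e in leRHS](@divfK _ #|A|.+1%:R) ?pnatr_eq0// mulr_natr.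
apply: uvw.
- by near: n; exact: lim_v.
- by near: n; exact: near_w.
Unshelve. all: by end_near. Qed.

End limn_esup_split.

Lemma ereal_sup_image_le (R : realType) (X : Type) (H : set X) (f : X -> \bar R) x P :
  (ereal_sup [set f P | P in H] <= x)%E -> H P -> (f P <= x)%E.
Proof. by move=> supx HP; apply: le_trans supx; apply: ereal_sup_ubound; exists P. Qed.

Lemma ereal_inf_image_ge (R : realType) (X : Type) (H : set X) (f : X -> \bar R) x P :
  (x <= ereal_inf [set f P | P in H])%E -> H P -> (x <= f P)%E.
Proof. by move=> infx HP; apply: le_trans infx _; apply: ereal_inf_lbound; exists P. Qed.

Section union_bound.
Context d (T : measurableType d) (R : realType).
Local Open Scope ereal_scope.

Lemma le_measure_bigsetU (mu : {measure set T -> \bar R}) (I : Type) (r : seq I)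
    (P : pred I) (F : I -> set T) :
  (forall j, P j -> measurable (F j)) ->
  mu (\big[setU/set0]_(j <- r | P j) F j) <= \sum_(j <- r | P j) mu (F j).
Proof.
move=> mF.
pose Q (X : set T) s := measurable X /\ mu X <= s.
suff [] : Q (\big[setU/set0]_(j <- r | P j) F j) (\sum_(j <- r | P j) mu (F j)) by [].
apply: (big_ind2 Q) => [|X s Y t [mX muX] [mY muY]|j Pj].
- by split; rewrite ?measure0.
- split; first exact: measurableU.
  by apply: le_trans (measureU2 _ mX mY) _; exact: leeD.
- by split; [exact: mF|].
Qed.
End union_bound.

Section rejection_event.
Context d (T : measurableType d) (R : realType) (mu : probability T R).
Context (I : finType) (A : {set I}) (b : T -> bool) (c : I -> T -> bool).
Hypotheses (mb : measurable [set t | b t]) (mc : forall j, measurable [set t | c j t]).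
Local Open Scope ereal_scope.

Local Notation B := [set t | b t || [exists j in A, ~~ c j t]].

Let orNexistsE : B = [set t | b t] `|` \big[setU/set0]_(j in A) ~` [set t | c j t].
Proof.
apply/seteqP; split => t /=.
  case/orP => [|/existsP[j /andP[jA cj]]]; first by left.
  right; rewrite -bigcup_seq_cond; exists j; last exact/negP.
  by rewrite /= jA andbT; exact: mem_index_enum.
case=> [->//|]; rewrite -bigcup_seq_cond => -[j /= /andP[_ jA] cj].
by apply/orP; right; apply/existsP; exists j; rewrite jA; apply/negP.
Qed.

Lemma measurable_orNexists : measurable B.
Proof.
rewrite orNexistsE; apply: measurableU => //.
by apply: bigsetU_measurable => j _; exact: measurableC.
Qed.

Lemma prob_orNexists_le :
  mu B <= mu [set t | b t] + \sum_(j in A) (1 - mu [set t | c j t]).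
Proof.
have mU : measurable (\big[setU/set0]_(j in A) ~` [set t | c j t]).
  by apply: bigsetU_measurable => j _; exact: measurableC.
rewrite orNexistsE; apply: le_trans (measureU2 _ mb mU) _; rewrite leeD2l//.
apply: le_trans (le_measure_bigsetU mu _ (fun j _ => measurableC (mc j))) _.
apply: lee_sum => j _; rewrite le_eqVlt; apply/orP; left; apply/eqP.
exact: probability_setC.
Qed.

Lemma prob_orNexists_ge_l : mu [set t | b t] <= mu B.
Proof.
by apply: le_measure; rewrite ?inE//; [exact: measurable_orNexists|move=> t /= ->].
Qed.

Lemma prob_orNexists_ge_r j : j \in A -> 1 - mu [set t | c j t] <= mu B.
Proof.
move=> jA; rewrite -probability_setC//; apply: le_measure; rewrite ?inE.
- exact: measurableC.
- exact: measurable_orNexists.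
- move=> t /= cj; apply/orP; right; apply/existsP; exists j; rewrite jA.
  exact/negP.
Qed.

Lemma prob_orNexists_le_eps (a e : R) :
  mu [set t | b t] <= (a + e)%:E ->
  (forall j, j \in A -> (1 - e)%:E <= mu [set t | c j t]) ->
  mu B <= (a + e *+ #|A|.+1)%:E.
Proof.
move=> mub muc; apply: le_trans prob_orNexists_le _.
rewrite mulrSr addrCA addrC EFinD leeD // -sumr_const -sumEFin.
apply: lee_sum => j jA; move: (muc j jA).
by rewrite -[mu _]fineK ?fin_num_measure// !lee_fin => ?; lra.
Qed.

Lemma prob_orNexists_ge_eps j (a e : R) : j \in A ->
  mu [set t | c j t] <= (a + e)%:E -> (1 - a - e)%:E <= mu B.
Proof.
move=> jA muc; apply: le_trans (prob_orNexists_ge_r jA); move: muc.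
by rewrite -[mu _]fineK ?fin_num_measure// !lee_fin => ?; lra.
Qed.

End rejection_event.

Lemma phiMIE d R T (phi : R -> nat -> {set 'I_d} -> T -> bool) a n S :
  [set t | phiMI phi a n S t] =
  [set t | phi a n S t || [exists j in S, ~~ phi a n (S :\ j) t]].
Proof.
apply/seteqP; split => t; rewrite /= /phiMI; case: eqP => [->|//].
- by move=> ->.
- by case/orP => // /existsP[j]; rewrite inE.
Qed.

Section phiMI_level_power.
Context (R : realType) (dd : measure_display) (T : measurableType dd)
  (Dist : Type) (d : nat) (G : Dist -> dag d) (ci : Dist -> {set 'I_d} -> Prop)
  (law : Dist -> nat -> probability T R)
  (phi : R -> nat -> {set 'I_d} -> T -> bool) (S : {set 'I_d}).
Hypotheses (hci : forall P S', ci P S' <-> dsep (G P) nE nY (Xset S'))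
  (mphi : forall a n S', measurable [set t | phi a n S' t]).
Local Open Scope ereal_scope.

Local Notation rej S' := (fun a n => phi a n S').
Local Notation rejMI := (fun a n => phiMI phi a n S).
Local Notation pS a := (prob_rej law (rej S a)).
Local Notation pSj a j := (prob_rej law (rej (S :\ j) a)).
Local Notation pMI a := (prob_rej law (rejMI a)).

Lemma prob_phiMI_le a e P n :
  pS a P n <= (a + e)%:E -> (forall j, j \in S -> (1 - e)%:E <= pSj a j P n) ->
  pMI a P n <= (a + e *+ #|S|.+1)%:E.
Proof. by rewrite /prob_rej phiMIE; exact: prob_orNexists_le_eps. Qed.

Lemma prob_phiMI_ge a P n : pS a P n <= pMI a P n.
Proof. by rewrite /prob_rej phiMIE; exact: prob_orNexists_ge_l. Qed.

Lemma prob_phiMI_ge_eps a e P n j : j \in S ->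
  pSj a j P n <= (a + e)%:E -> (1 - a - e)%:E <= pMI a P n.
Proof. by rewrite /prob_rej phiMIE; exact: prob_orNexists_ge_eps. Qed.

Lemma pw_level_phiMI :
  pw_level law (H0I ci S) (rej S) ->
  (forall j, j \in S -> pw_power law (H0I ci (S :\ j)) (rej (S :\ j))) ->
  pw_level law (H0MI ci S) rejMI.
Proof.
move=> lvS pwS a a01; apply: ge_ereal_sup => _ [P [ciS minS] <-].
apply: (@limn_esup_le_split _ _ S _ (pS a P) (fun j => pSj a j P)).
- exact: ereal_sup_image_le (lvS a a01) ciS.
- move=> j jS; rewrite -(pwS j jS a a01); apply: ereal_inf_lbound.
  by exists P => //; apply: minS; exact: properD1.
- by move=> n e; exact: prob_phiMI_le.
Qed.

Lemma unif_level_phiMI :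
  unif_level law (H0I ci S) (rej S) ->
  (forall j, j \in S -> unif_power law (H0I ci (S :\ j)) (rej (S :\ j))) ->
  unif_level law (H0MI ci S) rejMI.
Proof.
move=> lvS pwS a a01.
apply: (@limn_esup_le_split _ _ S _ _
  (fun j n => ereal_inf [set pSj a j P n | P in ~` H0I ci (S :\ j)]) _ (lvS a a01)).
  by move=> j jS; rewrite (pwS j jS a a01).
move=> n e hS hSj; apply: ge_ereal_sup => _ [P [ciS minS] <-].
apply: prob_phiMI_le; first exact: ereal_sup_image_le hS ciS.
move=> j jS; apply: ereal_inf_image_ge (hSj j jS) _.
by apply: minS; exact: properD1.
Qed.

Lemma pw_power_phiMI :
  pw_power law (H0I ci S) (rej S) ->
  (forall j, j \in S -> pw_level law (H0I ci (S :\ j)) (rej (S :\ j))) ->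
  pw_power_atleast law (H0MI ci S) rejMI (fun a => (1 - a)%:E).
Proof.
move=> pwS lvS a a01; have /andP[a0 _] := a01.
apply: le_ereal_inf_tmp => _ [P notMI <-].
apply/limn_einf_ge_nearP => e e0.
have [ciS|nciS] := pselect (ci P S).
- have [j jS cij] := exists_invariant_setD1 (hci P) ciS notMI.
  have /limn_esup_le_nearP/(_ e e0) := ereal_sup_image_le (lvS j jS a a01) cij.
  by apply: filterS => n; exact: prob_phiMI_ge_eps.
- have /limn_einf_ge_nearP/(_ e e0) : 1 <= limn_einf (pS a P).
    by rewrite -(pwS a a01); apply: ereal_inf_lbound; exists P.
  apply: filterS => n hS; apply: le_trans (prob_phiMI_ge a P n).
  by apply: le_trans hS; rewrite lee_fin; lra.
Qed.

Lemma unif_power_phiMI :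
  unif_power law (H0I ci S) (rej S) ->
  (forall j, j \in S -> unif_level law (H0I ci (S :\ j)) (rej (S :\ j))) ->
  unif_power_atleast law (H0MI ci S) rejMI (fun a => (1 - a)%:E).
Proof.
move=> pwS lvS a a01; have /andP[a0 _] := a01.
apply/limn_einf_ge_nearP => e e0.
have /limn_einf_ge_nearP/(_ e e0) near_S :
    1 <= limn_einf (fun n => ereal_inf [set pS a P n | P in ~` H0I ci S]).
  by rewrite (pwS a a01).
have near_Sj := filter_forall_in
  (fun j jS => (limn_esup_le_nearP _ _).1 (lvS j jS a a01) e e0).
near=> n.
have hS : (1 - e)%:E <= ereal_inf [set pS a P n | P in ~` H0I ci S] by near: n.
have hSj : forall j, j \in S ->
    ereal_sup [set pSj a j P n | P in H0I ci (S :\ j)] <= (a + e)%:E.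
  by near: n; exact: near_Sj.
apply: le_ereal_inf_tmp => _ [P notMI <-].
have [ciS|nciS] := pselect (ci P S).
- have [j jS cij] := exists_invariant_setD1 (hci P) ciS notMI.
  exact: prob_phiMI_ge_eps jS (ereal_sup_image_le (hSj j jS) cij).
- apply: le_trans (prob_phiMI_ge a P n); apply: le_trans (ereal_inf_image_ge hS nciS).
  by rewrite lee_fin; lra.
Unshelve. all: by end_near. Qed.

End phiMI_level_power.

Unset Implicit Arguments.

Theorem theorem1 (R : realType) (dd : measure_display) (T : measurableType dd)
  (Dist : Type) (d : nat)
  (G : Dist -> dag d)
  (ci : Dist -> {set 'I_d} -> Prop)
  (law : Dist -> nat -> probability T R)
  (phi : R -> nat -> {set 'I_d} -> T -> bool)
  (S : {set 'I_d}) :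
  (* Markov + faithful: Y _||_ E | X_S'  iff  E, Y d-separated by X_S' in G P *)
  (forall P S', ci P S' <-> dsep (G P) nE nY (Xset S')) ->
  (* decision rules are measurable functions of the data *)
  (forall alpha n S', measurable [set t | phi alpha n S' t]) ->
  ((* pointwise *)
   (pw_level law (H0I ci S) (fun a n => phi a n S) /\
    pw_power law (H0I ci S) (fun a n => phi a n S) /\
    (forall j, j \in S ->
       pw_level law (H0I ci (S :\ j)) (fun a n => phi a n (S :\ j)) /\
       pw_power law (H0I ci (S :\ j)) (fun a n => phi a n (S :\ j)))) ->
   pw_level law (H0MI ci S) (fun a n => phiMI phi a n S) /\
   pw_power_atleast law (H0MI ci S) (fun a n => phiMI phi a n S)
     (fun a => (1 - a)%:E)) /\
  ((* uniform *)
   (unif_level law (H0I ci S) (fun a n => phi a n S) /\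
    unif_power law (H0I ci S) (fun a n => phi a n S) /\
    (forall j, j \in S ->
       unif_level law (H0I ci (S :\ j)) (fun a n => phi a n (S :\ j)) /\
       unif_power law (H0I ci (S :\ j)) (fun a n => phi a n (S :\ j)))) ->
   unif_level law (H0MI ci S) (fun a n => phiMI phi a n S) /\
   unif_power_atleast law (H0MI ci S) (fun a n => phiMI phi a n S)
     (fun a => (1 - a)%:E)).
Proof.
move=> hci mphi; split=> -[lvS [pwS hSj]]; split.
- by apply: pw_level_phiMI => // j /hSj[].
- by apply: (pw_power_phiMI hci) => // j /hSj[].
- by apply: unif_level_phiMI => // j /hSj[].
- by apply: (unif_power_phiMI hci) => // j /hSj[].
Qed.
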